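(* Let $D$ be a discrete valuation ring with maximal ideal $P=\pi D$ and field of fractions $K$. Let $A$ be a $D$-algebra with standard assumptions, and let $\widehat{A}$ be the $P$-adic completion of $A$. Then $\textnormal{Int}_K(\widehat{A})=\textnormal{Int}_K(A)$.
   Context: A $D$-algebra $A$ satisfies the standard assumptions if it is torsion-free as a $D$-module and $A\cap K = D$ inside $K\otimes_D A$; polynomials in $K[X]$ are evaluated in $K\otimes_D A$, and $\textnormal{Int}_K(A)=\{f\in K[X]\mid f(A)\subseteq A\}$. $\widehat{A}=\varprojlim A/\pi^kA$, into which $A$ embeds canonically; $\textnormal{Int}_K(\widehat{A})=\{f\in K[X]\mid f(\widehat{A})\subseteq \widehat{A}\}$, with evaluation in $K\otimes_D\widehat{A}$. *)

From HB Require Import structures.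
From mathcomp Require Import all_boot all_order all_algebra.
Set Implicit Arguments. Unset Strict Implicit. Unset Printing Implicit Defensive.
Import Order.TTheory GRing.Theory Num.Theory.
Local Open Scope ring_scope.

Definition is_DVR (D : idomainType) (pi : D) : Prop :=
  pi != 0 /\ pi \isn't a GRing.unit /\
  forall x : D, x != 0 -> exists (u : D) (n : nat), u \is a GRing.unit /\ x = u * pi ^+ n.

Notation K_of D := {fraction D}.
Definition toK (D : idomainType) : D -> K_of D := @FracField.tofrac D.

(* K (x)_D M is realised as the localization S^{-1} M, S = D \ {0}:
   pairs (m, s) with (m, s) ~ (m', s') iff t (s' m - s m') = 0 for some t != 0. *)

Definition torsion_free (D : idomainType) (A : algType D) : Prop :=
  forall (d : D) (a : A), d *: a = 0 -> d = 0 \/ a = 0.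

(* A \cap K = D inside K (x)_D A: if k = d/e in K is such that k (x) 1 lies in A
   (i.e. (d 1_A, e) ~ (a, 1) for some a in A), then k lies in D. *)
Definition cap_K_eq_D (D : idomainType) (A : algType D) : Prop :=
  forall d e : D, e != 0 ->
    (exists (a : A) (t : D), t != 0 /\ t *: (e *: a - d%:A) = 0) ->
    exists c : D, d = e * c.

Definition standard_assumptions (D : idomainType) (A : algType D) : Prop :=
  torsion_free A /\ cap_K_eq_D A.

Definition evalD (D : idomainType) (A : algType D) (g : {poly D}) (x : A) : A :=
  (map_poly (in_alg A) g).[x].

(* Int_K(A): f in K[X] with f(A) \subseteq A, evaluation in K (x)_D A.
   Writing f = g / d with g in D[X], d in D nonzero, f(x) = (g(x), d) in
   S^{-1}A, and f(x) in A means (g(x), d) ~ (y, 1) for some y in A. *)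
Definition IntK (D : idomainType) (A : algType D) (f : {poly K_of D}) : Prop :=
  forall (g : {poly D}) (d : D), d != 0 ->
    map_poly (@toK D) g = toK d *: f ->
    forall x : A, exists (y : A) (t : D), t != 0 /\ t *: (d *: y - evalD g x) = 0.

(* The pi-adic completion \hat A = lim A / pi^k A, realised as compatible
   sequences (x_k) (x_k representing the component in A / pi^k A) with
   x_{k+1} = x_k mod pi^k A, two sequences being equal iff they agree
   modulo pi^k A in every component k. *)
Definition congr_pi (D : idomainType) (A : algType D) (pi : D) (k : nat) (a b : A) : Prop :=
  exists c : A, a - b = pi ^+ k *: c.

Definition compat_seq (D : idomainType) (A : algType D) (pi : D) (x : nat -> A) : Prop :=
  forall k, congr_pi pi k (x k.+1) (x k).

(* Int_K(\hat A), evaluation in K (x)_D \hat A = S^{-1} \hat A. *)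
Definition IntK_hat (D : idomainType) (A : algType D) (pi : D) (f : {poly K_of D}) : Prop :=
  forall (g : {poly D}) (d : D), d != 0 ->
    map_poly (@toK D) g = toK d *: f ->
    forall x : nat -> A, compat_seq pi x ->
      exists (y : nat -> A) (t : D), compat_seq pi y /\ t != 0 /\
        forall k, congr_pi pi k (t *: (d *: y k - evalD g (x k))) 0.

From HB Require Import structures.
From mathcomp Require Import all_boot all_order all_algebra.
From Stdlib Require Import ClassicalEpsilon.
Set Implicit Arguments. Unset Strict Implicit. Unset Printing Implicit Defensive.
Import Order.TTheory GRing.Theory Num.Theory.
Local Open Scope ring_scope.

(* Write d = u pi^n with u a unit.  Polynomial maps respect congruences modulo
   pi^k A, and in a torsion-free algebra a congruence modulo pi^(n+k) between
   multiples of d divides down to a congruence modulo pi^k.  Hence if f = g/d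
   is integer-valued on A, the quotients y_k = g(x_k)/d, shifted by n, form a
   compatible sequence representing f(x) in the completion; conversely, taking
   a constant sequence x, the component n + v(t) of the completed identity
   t (d y - g(x)) = 0 already shows g(x) in pi^n A = d A. *)

Section Congruence.
Variables (D : idomainType) (A : algType D) (pi : D).

Lemma congr_pi_refl k (a : A) : congr_pi pi k a a.
Proof. by exists 0; rewrite subrr scaler0. Qed.

Lemma congr_pi_trans k (a b c : A) :
  congr_pi pi k a b -> congr_pi pi k b c -> congr_pi pi k a c.
Proof. by move=> [u Hu] [v Hv]; exists (u + v); rewrite scalerDr -Hu -Hv addrA subrK. Qed.

Lemma congr_pi_sub0 k (a b : A) : congr_pi pi k (a - b) 0 <-> congr_pi pi k a b.
Proof. by rewrite /congr_pi subr0. Qed.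

Lemma congr_pi_add k (a b a' b' : A) :
  congr_pi pi k a a' -> congr_pi pi k b b' -> congr_pi pi k (a + b) (a' + b').
Proof.
move=> [c Hc] [c' Hc']; exists (c + c').
by rewrite opprD addrACA Hc Hc' scalerDr.
Qed.

Lemma congr_pi_mul k (a b a' b' : A) :
  congr_pi pi k a a' -> congr_pi pi k b b' -> congr_pi pi k (a * b) (a' * b').
Proof.
move=> [c Hc] [c' Hc']; exists (c * b + a' * c').
have -> : a * b - a' * b' = (a - a') * b + a' * (b - b').
  by rewrite mulrBl mulrBr addrA subrK.
by rewrite Hc Hc' scalerDr scalerAl scalerAr.
Qed.

Lemma congr_pi_weaken k n (a b : A) : congr_pi pi (k + n) a b -> congr_pi pi k a b.
Proof. by move=> [c Hc]; exists (pi ^+ n *: c); rewrite scalerA -exprD. Qed.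

Lemma evalD_MXaddC (p : {poly D}) c (x : A) :
  evalD (p * 'X + c%:P) x = evalD p x * x + c%:A.
Proof.
by rewrite /evalD rmorphD rmorphM /= map_polyX map_polyC hornerD hornerMX hornerC.
Qed.

Lemma congr_pi_evalD k (g : {poly D}) (a b : A) :
  congr_pi pi k a b -> congr_pi pi k (evalD g a) (evalD g b).
Proof.
move=> Hab; elim/poly_ind: g => [|p c IHp].
  by rewrite /evalD !rmorph0 !horner0; apply: congr_pi_refl.
by rewrite !evalD_MXaddC; apply: congr_pi_add (congr_pi_mul IHp Hab) (congr_pi_refl _ _).
Qed.

Lemma compat_seq_shift (x : nat -> A) k j :
  compat_seq pi x -> congr_pi pi k (x (k + j)%N) (x k).
Proof.
move=> cx; elim: j => [|j IHj]; first by rewrite addn0; apply: congr_pi_refl.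
by apply: congr_pi_trans IHj; rewrite addnS; apply: (@congr_pi_weaken _ j).
Qed.

Lemma scaler_dvd_of_congr_pi u n (y z : A) : u \is a GRing.unit ->
  congr_pi pi n ((u * pi ^+ n) *: y) z -> exists y', (u * pi ^+ n) *: y' = z.
Proof.
move=> uU [c Hc]; exists (y - u^-1 *: c).
rewrite scalerBr scalerA mulrAC divrr // mul1r -Hc.
by rewrite opprB addrC subrK.
Qed.

End Congruence.

Section TorsionFree.
Variables (D : idomainType) (A : algType D) (pi : D).
Hypotheses (tfA : torsion_free A) (pi_neq0 : pi != 0).

Lemma scaler_cancel (s : D) (a b : A) : s != 0 -> s *: a = s *: b -> a = b.
Proof.
move=> s_neq0 Eab; have : s *: (a - b) = 0 by rewrite scalerBr Eab subrr.
by case/tfA => [/eqP|/eqP]; rewrite ?(negbTE s_neq0) // subr_eq0 => /eqP.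
Qed.

Lemma congr_pi_scaleK u m k (a b : A) : u \is a GRing.unit ->
  congr_pi pi (m + k) ((u * pi ^+ m) *: a) ((u * pi ^+ m) *: b) ->
  congr_pi pi k a b.
Proof.
move=> uU [c Hc]; exists (u^-1 *: c).
apply: (@scaler_cancel (u * pi ^+ m)).
  by rewrite mulf_neq0 ?expf_neq0 //; apply: contraTneq uU => ->; rewrite unitr0.
rewrite scalerBr Hc !scalerA; congr (_ *: c).
by rewrite exprD [RHS]mulrC mulrA mulKr.
Qed.

Lemma IntK_dvd (f : {poly {fraction D}}) (g : {poly D}) (d : D) :
  IntK A f -> d != 0 -> map_poly (@toK D) g = toK d *: f ->
  forall x : A, exists y : A, d *: y = evalD g x.
Proof.
move=> intf d_neq0 Hg x; have [y [t [t_neq0 Ht]]] := intf g d d_neq0 Hg x.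
exists y; apply: (scaler_cancel t_neq0).
by apply/eqP; rewrite -subr_eq0 -scalerBr Ht.
Qed.

End TorsionFree.

Theorem mainTheorem10 (D : idomainType) (pi : D) (A : algType D) :
  is_DVR pi -> standard_assumptions A ->
  forall f : {poly {fraction D}}, IntK_hat A pi f <-> IntK A f.
Proof.
move=> [pi_neq0 [_ dvr]] [tfA _] f; split.
- move=> inthat g d d_neq0 Hg x.
  have [y [t [_ [t_neq0 Hy]]]] :=
    inthat g d d_neq0 Hg (fun=> x) (fun k => congr_pi_refl pi k x).
  have [u [n [uU Ed]]] := dvr d d_neq0.
  have [v [m [vU Et]]] := dvr t t_neq0.
  have Hdy : congr_pi pi n ((u * pi ^+ n) *: y (m + n)%N) (evalD g x).
    apply: (congr_pi_scaleK tfA pi_neq0 (m := m) vU); rewrite -Et -Ed.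
    by apply/congr_pi_sub0; rewrite -scalerBr.
  have [y' Ey'] := scaler_dvd_of_congr_pi uU Hdy.
  exists y', 1; split; first exact: oner_neq0.
  by rewrite Ed Ey' subrr scaler0.
- move=> intf g d d_neq0 Hg x cx.
  have Hy := IntK_dvd tfA intf d_neq0 Hg.
  pose y k := proj1_sig (constructive_indefinite_description _ (Hy (x k))).
  have yP k : d *: y k = evalD g (x k).
    by rewrite /y; case: constructive_indefinite_description.
  have [u [n [uU Ed]]] := dvr d d_neq0.
  exists (fun k => y (k + n)%N), 1; split; [|split; first exact: oner_neq0].
  + move=> k; apply: (congr_pi_scaleK tfA pi_neq0 (m := n) uU).
    rewrite -Ed !yP addSn addnC.
    exact/congr_pi_evalD/cx.
  + move=> k; rewrite scale1r; apply/congr_pi_sub0; rewrite yP.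
    exact/congr_pi_evalD/compat_seq_shift.
Qed.
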